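(* Let $T,N,N',L,L'$ be positive integers, let $\lambda\ge0$ and $\eta>0$ be real numbers, and let $p_1<p_2<\dots<p_L$ be primes with $p_i\ge 2L(L+T-1)\eta$ for every $i\in[L]$ and $p_L> LN'/L'-2L-2T+2$. Let $N_i=p_i+2L+2T-2$ for $i\in[L]$, and suppose $\lambda<\dfrac{N'-L-1/\eta}{N_L/L-N'/L'}$. Then $$\left(\frac{N_L\lambda}{L}+\sum_{i=1}^L\frac{N_i}{p_i}\right)^{-1}>\left(N'\left(\frac{\lambda}{L'}+1\right)\right)^{-1}.$$ *)

From mathcomp Require Export all_boot all_order all_algebra.
From mathcomp Require Export reals.
Export Order.TTheory GRing.Theory Num.Theory.
Local Open Scope ring_scope.

Definition Nidx {R : realType} (T L : nat) (p : nat -> nat) (i : nat) : R :=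
  (p i)%:R + 2 * L%:R + 2 * T%:R - 2.

(* Since p_i >= 2L(L+T-1)eta, each ratio N_i/p_i = 1 + 2(L+T-1)/p_i lies in
   [1, 1 + 1/(L eta)], so their sum lies in [L, L + 1/eta].  The bound on p_L makes
   N_L/L - N'/L' positive, so the hypothesis on lam becomes
   lam (N_L/L - N'/L') < N' - L - 1/eta, which rearranges to the reverse inequality
   between the two (positive) quantities being inverted. *)

From mathcomp Require Import ring lra.
Local Open Scope ring_scope.

Section NidxRatio.

Context {R : realType} {T L : nat} {p : nat -> nat}.

Lemma Nidx_ge_p i : (0 < L + T)%N -> (p i)%:R <= Nidx (R := R) T L p i.
Proof.
move=> LT_gt0; rewrite /Nidx.
have : (1 : R) <= L%:R + T%:R by rewrite -natrD ler1n.
lra.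
Qed.

Lemma Nidx_ratio_ge1 i :
  (0 < L + T)%N -> (0 < p i)%N -> 1 <= Nidx (R := R) T L p i / (p i)%:R.
Proof.
by move=> LT_gt0 p_gt0; rewrite ler_pdivlMr ?ltr0n // mul1r Nidx_ge_p.
Qed.

Lemma Nidx_ratio_le {eta : R} i :
  (0 < L)%N -> 0 < eta -> (0 < p i)%N ->
  2 * L%:R * (L%:R + T%:R - 1) * eta <= (p i)%:R ->
  Nidx T L p i / (p i)%:R <= 1 + (L%:R * eta)^-1.
Proof.
move=> L_gt0 eta_gt0 p_gt0 p_big.
have Leta_gt0 : 0 < L%:R * eta by rewrite mulr_gt0 ?ltr0n.
have shift_le : 2 * L%:R + 2 * T%:R - 2 <= (p i)%:R / (L%:R * eta).
  by rewrite ler_pdivlMr //; nra.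
rewrite ler_pdivrMr ?ltr0n // mulrDl mul1r [_^-1 * _]mulrC /Nidx.
lra.
Qed.

Lemma sum_Nidx_ratio_bounds {eta : R} :
  (0 < L)%N -> 0 < eta ->
  (forall i, (1 <= i <= L)%N -> (0 < p i)%N) ->
  (forall i, (1 <= i <= L)%N -> 2 * L%:R * (L%:R + T%:R - 1) * eta <= (p i)%:R) ->
  L%:R <= \sum_(1 <= i < L.+1) Nidx (R := R) T L p i / (p i)%:R <= L%:R + eta^-1.
Proof.
move=> L_gt0 eta_gt0 p_gt0 p_big.
have LT_gt0 : (0 < L + T)%N by rewrite addn_gt0 L_gt0.
apply/andP; split.
- apply: (@le_trans _ _ (\sum_(1 <= i < L.+1) (1 : R))).
    by rewrite sumr_const_nat subn1.
  by rewrite !big_nat; apply: ler_sum => i /p_gt0; apply: Nidx_ratio_ge1.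
- apply: (@le_trans _ _ (\sum_(1 <= i < L.+1) (1 + (L%:R * eta)^-1))).
    rewrite !big_nat; apply: ler_sum => i i_in.
    exact: Nidx_ratio_le (p_gt0 i i_in) (p_big i i_in).
  rewrite sumr_const_nat subn1 /= mulrnDl lerD2l -[_ *+ L]mulr_natr.
  by rewrite invfM mulrAC mulVf ?mul1r // pnatr_eq0 -lt0n.
Qed.

Lemma ratio_lt_Nidx_last {N' L' : nat} :
  (0 < L)%N -> (0 < L')%N ->
  L%:R * N'%:R / L'%:R - 2 * L%:R - 2 * T%:R + 2 < (p L)%:R :> R ->
  N'%:R / L'%:R < Nidx (R := R) T L p L / L%:R.
Proof.
move=> L_gt0 L'_gt0 pL_big.
rewrite ltr_pdivlMr ?ltr0n // mulrC mulrA /Nidx.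
lra.
Qed.

End NidxRatio.

Theorem lemma4 (R : realType) (T N N' L L' : nat) (lam eta : R) (p : nat -> nat) :
  (0 < T)%N -> (0 < N)%N -> (0 < N')%N -> (0 < L)%N -> (0 < L')%N ->
  0 <= lam -> 0 < eta ->
  (forall i, (1 <= i <= L)%N -> prime (p i)) ->
  (forall i j, (1 <= i)%N -> (i < j)%N -> (j <= L)%N -> (p i < p j)%N) ->
  (forall i, (1 <= i <= L)%N ->
     2 * L%:R * (L%:R + T%:R - 1) * eta <= (p i)%:R :> R) ->
  (p L)%:R > L%:R * N'%:R / L'%:R - 2 * L%:R - 2 * T%:R + 2 :> R ->
  lam < (N'%:R - L%:R - 1 / eta) / (Nidx T L p L / L%:R - N'%:R / L'%:R) ->
  (Nidx T L p L * lam / L%:R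
     + \sum_(1 <= i < L.+1) Nidx T L p i / (p i)%:R)^-1
  > (N'%:R * (lam / L'%:R + 1))^-1.
Proof.
move=> _ _ N'_gt0 L_gt0 L'_gt0 lam_ge0 eta_gt0 p_prime _ p_big pL_big lam_lt.
have p_gt0 i : (1 <= i <= L)%N -> (0 < p i)%N by move/p_prime/prime_gt0.
have /andP[S_ge S_le] := sum_Nidx_ratio_bounds L_gt0 eta_gt0 p_gt0 p_big.
have D_gt0 := ratio_lt_Nidx_last L_gt0 L'_gt0 pL_big.
move: lam_lt; rewrite ltr_pdivlMr ?subr_gt0 // => lam_lt.
have NL_ge0 : 0 <= Nidx T L p L * lam / L%:R.
  rewrite divr_ge0 ?mulr_ge0 ?ler0n // (le_trans _ (Nidx_ge_p _ _)) //.
  by rewrite addn_gt0 L_gt0.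
have lamL'_ge0 : 0 <= lam / L'%:R by rewrite divr_ge0 ?ler0n.
have LHS_gt0 : 0 < Nidx T L p L * lam / L%:R
                   + \sum_(1 <= i < L.+1) Nidx T L p i / (p i)%:R.
  have : (0 : R) < L%:R by rewrite ltr0n.
  lra.
have RHS_gt0 : 0 < N'%:R * (lam / L'%:R + 1).
  by rewrite mulr_gt0 ?ltr0n // ltr_wpDl.
rewrite ltf_pV2 ?posrE // mulrDr mulr1 mulrAC [_ * lam]mulrC mulrCA.
move: lam_lt; rewrite mulrBr.
lra.
Qed.
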